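(* Let $n\geq 3$ and $k\geq 2$ be integers and let $LCG(n,k)$ be the layer cycle graph with parameters $n,k$. Then the metric dimension of $LCG(n,k)$ is $\beta(LCG(n,k))=n(n-1)^{k-2}$.
   Context: All graphs are simple and connected; $d(u,v)$ is the shortest-path distance. For an ordered set $R=\{r_1,\dots,r_m\}$ of vertices, $r(u\,|\,R)=(d(u,r_1),\dots,d(u,r_m))$. $R$ is a resolving set of $G$ if distinct vertices of $G$ have distinct representations $r(\cdot|R)$; the metric dimension $\beta(G)$ is the minimum size of a resolving set. The layer cycle graph $LCG(n,k)$ ($n\geq 3$, $k\geq 2$) is constructed as follows. Its vertex set is partitioned into layers $U_1,\dots,U_k$. Layer $U_1$ is a cycle $C_n$ on vertices $1,\dots,n$. For $2\leq p\leq k$, layer $U_p$ consists of $n(n-1)^{p-2}$ vertex-disjoint cycles of length $n$, each with a distinguished vertex called its head vertex. Each vertex of $U_1$ is joined by an edge to the head vertex of exactly one cycle of $U_2$ (distinct vertices to distinct cycles). For $2\leq p<k$, each of the $n-1$ non-head vertices of each cycle of $U_p$ is joined by an edge to the head vertex of exactly one cycle of $U_{p+1}$, in such a way that every cycle of $U_{p+1}$ has its head joined to exactly one such vertex. There are no other edges. Thus $LCG(n,k)$ has $n+\sum_{p=2}^{k}n^2(n-1)^{p-2}$ vertices. *)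

From mathcomp Require Import all_boot.
Set Implicit Arguments. Unset Strict Implicit. Unset Printing Implicit Defensive.

Section Graph.
Variables (T : finType) (e : rel T).

Definition walk_len (m : nat) (u v : T) : bool :=
  [exists p : m.-tuple T, path e u p && (last u p == v)].

(* shortest-path distance: least m with a walk of length m from u to v.
   In a connected graph a shortest path has < #|T| edges, so searching
   m in [0, #|T|) is exact. *)
Definition dist (u v : T) : nat :=
  find (fun m => walk_len m u v) (iota 0 #|T|).

Definition resolving (R : {set T}) : bool :=
  [forall u, forall v, [forall r in R, dist u r == dist v r] ==> (u == v)].

Definition metric_dim : nat :=
  #|[arg min_(R < [set: T] | resolving R) #|R|]|.
End Graph.

(* A vertex of layer p (1 <= p <= k) is encoded as (q, t) with q = p-1 : 'I_k and
   t : k.-tuple 'I_n, where only entries t_0 .. t_q are meaningful: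
   - t_0 : position on the layer-1 cycle (p = 1), or the layer-1 vertex
     the ancestral U_2 cycle is attached to (p >= 2);
   - t_1 .. t_(q-1) : the non-head vertex (value in 1..n-1) of the
     ancestor cycle to which the next cycle is attached;
   - t_q : position in its own cycle (0 = head vertex when p >= 2).
   Entries beyond q are 0 (canonical form). *)
Definition ent n k (t : k.-tuple 'I_n) (i : nat) : nat := nth 0 [seq val j | j <- t] i.

Definition lcg_valid n k (x : 'I_k * k.-tuple 'I_n) : bool :=
  [forall i : 'I_k, ((x.1 < i) ==> (ent x.2 i == 0)) &&
                    (((0 < i) && (i < x.1)) ==> (ent x.2 i != 0))].

Definition lcg_vertex n k := {x : 'I_k * k.-tuple 'I_n | lcg_valid x}.

Definition lcg_cyc n k (a b : 'I_k * k.-tuple 'I_n) : bool :=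
  [&& a.1 == b.1,
      [forall i : 'I_k, (i < a.1) ==> (ent a.2 i == ent b.2 i)] &
      (ent b.2 a.1 == (ent a.2 a.1).+1 %% n) || (ent a.2 a.1 == (ent b.2 a.1).+1 %% n)].

(* edge from a (layer p, which is U_1 or a non-head vertex of a cycle of U_p)
   to the head of the cycle of U_(p+1) attached to it *)
Definition lcg_att n k (a b : 'I_k * k.-tuple 'I_n) : bool :=
  [&& b.1 == a.1.+1 :> nat,
      [forall i : 'I_k, (i <= a.1) ==> (ent a.2 i == ent b.2 i)],
      ent b.2 b.1 == 0 &
      (a.1 == 0 :> nat) || (ent a.2 a.1 != 0)].

Definition lcg_edge n k (a b : 'I_k * k.-tuple 'I_n) : bool :=
  [|| lcg_cyc a b, lcg_att a b | lcg_att b a].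

Definition lcg_rel n k : rel (lcg_vertex n k) :=
  fun x y => lcg_edge (val x) (val y).
Arguments lcg_rel n k : clear implicits.

From mathcomp Require Import all_boot zify.
Set Implicit Arguments. Unset Strict Implicit. Unset Printing Implicit Defensive.

(* Identify a vertex of layer q+1 with its address t_0 ... t_q.  For a vertex z
   of the last layer, d(w, z) is obtained by climbing from w to the depth j at
   which the addresses of w and z diverge, walking along that cycle, and
   descending to z; the formula is certified by being 1-Lipschitz along edges
   and strictly decreasing along some edge out of every w <> z.
   Lower bound: the positions 1 and n-1 of a last-layer cycle are equidistant
   from every vertex outside that cycle, so a resolving set meets each of the
   n(n-1)^(k-2) last-layer cycles.
   Upper bound: the position-1 vertices of these cycles resolve the graph.  For
   u, v at equal distances from all of them, let i be the first depth where
   their addresses differ; landmarks that copy the common prefix and branch off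
   at depth i with a prescribed coordinate x measure the cyclic distance from x
   to the coordinates of u and v at depth i, which forces u = v. *)

Lemma find_iota_first (p : pred nat) N m : m < N -> p m ->
  (forall i, i < m -> ~~ p i) -> find p (iota 0 N) = m.
Proof.
move=> mN pm before_m.
have has_p : has p (iota 0 N) by apply/hasP; exists m; rewrite ?mem_iota.
case: (ltngtP (find p (iota 0 N)) m) => // h.
- have := nth_find 0 has_p; rewrite nth_iota ?add0n; last exact: ltn_trans h mN.
  by rewrite (negbTE (before_m _ h)).
- by have := before_find 0 h; rewrite nth_iota // add0n pm.
Qed.

Section Graph.
Variables (T : finType) (e : rel T).

Lemma walk_lenP m u v :
  reflect (exists s, [/\ size s = m, path e u s & last u s = v]) (walk_len e m u v).
Proof.
apply: (iffP existsP) => [[p /andP [hp /eqP hl]] | [s [<- hp hl]]].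
  by exists (val p); rewrite size_tuple.
by exists (in_tuple s); rewrite /= hp hl eqxx.
Qed.

Section Potential.
Variables (z : T) (F : T -> nat).
Hypothesis F_z : F z = 0.
Hypothesis F_lip : forall u v, e u v -> F u <= (F v).+1.
Hypothesis F_desc : forall u, u != z -> exists2 v, e u v & (F v).+1 = F u.

Lemma potential_neq_z u : 0 < F u -> u != z.
Proof. by apply: contra_ltnN => /eqP ->; rewrite F_z. Qed.

Lemma potential_walk u : exists s, [/\ size s = F u, path e u s & last u s = z].
Proof.
move Fu: (F u) => m; elim: m u Fu => [|m IH] u Fu.
  exists [::]; split=> //=; apply/eqP; apply: contraT => /F_desc [v _].
  by rewrite Fu.
have uz : u != z by apply: potential_neq_z; rewrite Fu.
have [v euv /eqP] := F_desc uz; rewrite Fu eqSS => /eqP Fv.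
have [s [<- hs <-]] := IH v Fv.
by exists (v :: s); rewrite /= euv hs.
Qed.

Lemma potential_path_le s u : path e u s -> F u <= size s + F (last u s).
Proof.
elim: s u => [|x s IH] u //= /andP [eux hs].
by have := IH _ hs; have := F_lip eux; lia.
Qed.

Lemma potential_lt_card u : F u < #|T|.
Proof.
have attained m : m <= F u -> exists w, F w = m.
  move Fu: (F u) => p; elim: p u Fu => [|p IH] u Fu hm.
    by exists u; lia.
  case: (ltngtP m p.+1) => hmp; last by exists u; rewrite Fu hmp.
    have uz : u != z by apply: potential_neq_z; rewrite Fu.
    have [v _ /eqP] := F_desc uz; rewrite Fu eqSS => /eqP Fv.
    by apply: (IH v) => //; lia.
  lia.
rewrite cardT -(size_map F) -[(F u).+1](size_iota 0).
apply: uniq_leq_size (iota_uniq 0 (F u).+1) _ => m; rewrite mem_iota add0n => hm.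
by have [w <-] := attained m hm; apply: map_f; rewrite mem_enum.
Qed.

Lemma dist_potential u : dist e u z = F u.
Proof.
apply: find_iota_first; first exact: potential_lt_card.
  by apply/walk_lenP; apply: potential_walk.
move=> m hm; apply/walk_lenP => -[s [sm hs hl]].
by have := potential_path_le hs; rewrite hl F_z sm; lia.
Qed.

End Potential.

Hypothesis e_sym : symmetric e.

Lemma walk_len_sym m u v : walk_len e m u v -> walk_len e m v u.
Proof.
move/walk_lenP => [s [<- hs hl]]; apply/walk_lenP.
exists (rev (belast u s)); split; first by rewrite size_rev size_belast.
  rewrite -hl rev_path (@eq_path _ _ e) // => x y /=; exact: e_sym.
by case: s {hs} hl => [|x s] /= <-; rewrite ?rev_cons ?last_rcons.
Qed.

Lemma dist_sym u v : dist e u v = dist e v u.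
Proof. by apply: eq_find => m; apply/idP/idP; apply: walk_len_sym. Qed.

End Graph.

Section MetricDimension.
Variables (T : finType) (e : rel T).

Lemma resolvingP (R : {set T}) : reflect
  (forall u v, (forall r, r \in R -> dist e u r = dist e v r) -> u = v) (resolving e R).
Proof.
apply: (iffP forallP) => [H u v huv | H u].
  apply/eqP; move/forallP: (H u) => /(_ v) /implyP; apply.
  by apply/forall_inP => r /huv ->.
by apply/forallP => v; apply/implyP => /forall_inP h; apply/eqP/H => r /h /eqP.
Qed.

Lemma resolvingS (R1 R2 : {set T}) :
  R1 \subset R2 -> resolving e R1 -> resolving e R2.
Proof.
move=> /subsetP sR /resolvingP H; apply/resolvingP => u v huv.
by apply: H => r /sR; apply: huv.
Qed.

Lemma metric_dim_min (R0 : {set T}) : resolving e R0 ->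
  (forall R, resolving e R -> #|R0| <= #|R|) -> metric_dim e = #|R0|.
Proof.
move=> res0 min0; rewrite /metric_dim.
case: arg_minnP => [|R resR minR]; first exact: resolvingS (subsetT R0) res0.
by apply/eqP; rewrite eqn_leq minR // min0.
Qed.

End MetricDimension.

Section CycleDistance.
Variable n : nat.

Definition cdist (x y : nat) := minn (x - y + (y - x)) (n - (x - y + (y - x))).

Definition cyc_adj (x y : nat) := y = x.+1 %% n \/ x = y.+1 %% n.

Lemma cyc_adj_sym x y : cyc_adj x y -> cyc_adj y x.
Proof. by case; [right | left]. Qed.

Lemma cyc_adj_cases x y : x < n -> y < n -> cyc_adj x y ->
  y = x.+1 \/ (x = n.-1 /\ y = 0) \/ x = y.+1 \/ (y = n.-1 /\ x = 0).
Proof.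
have modS m : m < n -> m.+1 %% n = if m.+1 == n then 0 else m.+1.
  by move=> hm; case: eqP => [->|?]; [rewrite modnn | rewrite modn_small //; lia].
by move=> hx hy [] ->; rewrite modS //; case: eqP; lia.
Qed.

Lemma cdist_adj x x' y : x < n -> x' < n -> y < n -> cyc_adj x x' ->
  cdist x' y <= (cdist x y).+1.
Proof. by move=> hx hx' hy /(cyc_adj_cases hx hx'); rewrite /cdist; lia. Qed.

Lemma cdist_adj_down x y : 2 < n -> x < n -> y < n -> x != y ->
  exists x', [/\ x' < n, cyc_adj x x' & (cdist x' y).+1 = cdist x y].
Proof.
move=> n_gt2 hx hy /eqP hxy.
set up := if x.+1 == n then 0 else x.+1; set down := if x == 0 then n.-1 else x.-1.
have up_adj : cyc_adj x up.
  by left; rewrite /up; case: eqP => [->|?]; [rewrite modnn | rewrite modn_small //; lia].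
have down_adj : cyc_adj x down.
  right; rewrite /down; case: eqP => [->|?]; first by rewrite prednK ?modnn //; lia.
  by rewrite prednK ?modn_small //; lia.
have [eup|edown] : (cdist up y).+1 = cdist x y \/ (cdist down y).+1 = cdist x y.
  by rewrite /cdist /up /down; case: eqP; case: eqP; lia.
- by exists up; split=> //; rewrite /up; case: eqP; lia.
- by exists down; split=> //; rewrite /down; case: eqP; lia.
Qed.

Lemma cdistxx x : cdist x x = 0. Proof. rewrite /cdist; lia. Qed.
Lemma cdistC x y : cdist x y = cdist y x. Proof. rewrite /cdist; lia. Qed.
Lemma cdist_eq0 x y : x < n -> y < n -> cdist x y = 0 -> x = y.
Proof. rewrite /cdist; lia. Qed.
Lemma cdist_le_via0 x y : x < n -> y < n -> cdist x y <= cdist x 0 + cdist y 0.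
Proof. rewrite /cdist; lia. Qed.
Lemma cdist10 : 1 < n -> cdist 1 0 = 1. Proof. rewrite /cdist; lia. Qed.
Lemma cdist_pred0 : 1 < n -> cdist n.-1 0 = 1. Proof. rewrite /cdist; lia. Qed.

Lemma cdist01_inj a b : 2 < n -> a < n -> b < n ->
  cdist a 0 = cdist b 0 -> cdist a 1 = cdist b 1 -> a = b.
Proof. rewrite /cdist; lia. Qed.

Definition other (a : nat) := if a == 1 then 2 else 1.

Lemma other_neq a : other a != a.
Proof. by rewrite /other; case: (eqVneq a 1) => [->|h] //; rewrite eq_sym. Qed.
Lemma other_gt0 a : 0 < other a. Proof. by rewrite /other; case: eqP. Qed.
Lemma other_lt a : 2 < n -> other a < n. Proof. by rewrite /other; case: eqP; lia. Qed.

End CycleDistance.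

Definition ord_mod m (m_gt0 : 0 < m) (x : nat) : 'I_m := Ordinal (ltn_pmod x m_gt0).

Lemma ent_lt n k (t : k.-tuple 'I_n) i : 0 < n -> ent t i < n.
Proof.
move=> n_gt0; rewrite /ent; case: (ltnP i (size [seq val j | j <- t])) => h.
  by have /mapP [j _ ->] := mem_nth 0 h; apply: ltn_ord.
by rewrite nth_default.
Qed.

Lemma ent_default n k (t : k.-tuple 'I_n) i : k <= i -> ent t i = 0.
Proof. by move=> h; rewrite /ent nth_default // size_map size_tuple. Qed.

Lemma ent_mktuple n k (f : nat -> 'I_n) i :
  ent [tuple f i | i < k] i = if i < k then val (f i) else 0.
Proof.
case: ltnP => ik; last exact: ent_default.
by rewrite /ent (nth_map (f 0)) ?size_tuple // -[i]/(nat_of_ord (Ordinal ik)) nth_mktuple.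
Qed.

Lemma eq_ent n k (t t' : k.-tuple 'I_n) : (forall i, ent t i = ent t' i) -> t = t'.
Proof.
move=> h; apply/val_inj/(inj_map val_inj)/(@eq_from_nth _ 0) => [|i _].
  by rewrite !size_map !size_tuple.
exact: h.
Qed.

Section Climb.
Variable n : nat.

(* Going up from depth b to depth a: at each depth walk to the head of the
   cycle, then take the edge to the parent vertex. *)
Definition climb (t : nat -> nat) (a b : nat) :=
  \sum_(a.+1 <= i < b.+1) (cdist n (t i) 0).+1.

Lemma climb_nil t a : climb t a a = 0.
Proof. by rewrite /climb big_geq. Qed.

Lemma climbSr t a b : a <= b -> climb t a b.+1 = climb t a b + (cdist n (t b.+1) 0).+1.
Proof. by move=> h; rewrite /climb big_nat_recr. Qed.

Lemma climbSl t a b : a < b -> climb t a b = (cdist n (t a.+1) 0).+1 + climb t a.+1 b.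
Proof. by move=> h; rewrite /climb big_ltn. Qed.

Lemma eq_climb t t' a b : (forall i, a < i <= b -> t i = t' i) -> climb t a b = climb t' a b.
Proof. by move=> h; apply: eq_big_nat => i hi; rewrite h. Qed.

Lemma climb_cat t a b d : a <= b -> b <= d -> climb t a d = climb t a b + climb t b d.
Proof. by move=> h1 h2; rewrite /climb (@big_cat_nat _ _ _ b.+1). Qed.

Lemma climb_ge t a b : a < b -> (cdist n (t b) 0).+1 <= climb t a b.
Proof. by case: b => [|b] // h; rewrite climbSr // leq_addl. Qed.

Lemma climb_swap_top t t' a b : a < b -> (forall i, a < i < b -> t i = t' i) ->
  climb t a b + cdist n (t' b) 0 = climb t' a b + cdist n (t b) 0.
Proof.
case: b => [|b] // ab pre; rewrite !climbSr // (@eq_climb t t' a b) => [|i /andP [ai ib]].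
  lia.
by apply: pre; rewrite ai ltnS.
Qed.

End Climb.

Definition branch (c : nat -> nat) (q : nat) (t : nat -> nat) :=
  find (fun i => (i == q) || (t i != c i)) (iota 0 q.+1).

Lemma branch_eq c q t m : m <= q -> (forall i, i < m -> t i = c i) ->
  (m < q -> t m != c m) -> branch c q t = m.
Proof.
move=> hm before hne; apply: find_iota_first => [|/=|i hi /=]; first lia.
  by case: (ltngtP m q) => h //; [rewrite hne | lia].
by rewrite negb_or negbK before // eqxx andbT neq_ltn (leq_trans hi hm).
Qed.

Lemma branch_spec c q t : let j := branch c q t in
  [/\ j <= q, forall i, i < j -> t i = c i & j < q -> t j != c j].
Proof.
move=> j; set p := fun i => (i == q) || (t i != c i).
have has_p : has p (iota 0 q.+1).
  by apply/hasP; exists q; rewrite ?mem_iota /p ?eqxx ?add0n ?ltnSn.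
have jq : j < q.+1 by rewrite -(size_iota 0 q.+1) -has_find.
split=> [|i hi|hq]; first by [].
  have := before_find 0 hi; rewrite nth_iota ?add0n; last lia.
  by move=> /negbT; rewrite /p negb_or negbK => /andP [_ /eqP].
have : p (nth 0 (iota 0 q.+1) j) by apply: nth_find.
by rewrite nth_iota // add0n /p => /orP [/eqP h|//]; lia.
Qed.

Lemma eq_branch c q t t' : (forall i, i < q -> t i = t' i) -> branch c q t = branch c q t'.
Proof.
move=> tt'; have [j1 j2 j3] := branch_spec c q t.
apply/esym/branch_eq => // [i ij | jq]; last by rewrite -tt' ?j3.
by rewrite -tt' ?j2 //; apply: leq_trans ij j1.
Qed.

Lemma branch_le c q q' t : branch c q t <= q' <= q -> branch c q' t = branch c q t.
Proof.
case/andP => jq' q'q; have [j1 j2 j3] := branch_spec c q t.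
by apply: branch_eq => // jlt; apply: j3; apply: leq_trans q'q.
Qed.

Section LCG.
Variables n k : nat.
Hypotheses (n_gt2 : 2 < n) (k_gt1 : 1 < k).

Let n_gt0 : 0 < n. Proof. lia. Qed.
Let k_gt0 : 0 < k. Proof. lia. Qed.

Local Notation V := (lcg_vertex n k).
Local Notation E := (lcg_rel n k).

Definition layer (w : V) : nat := (val w).1.
Definition coord (w : V) (i : nat) : nat := ent (val w).2 i.

Lemma layer_lt w : layer w < k. Proof. exact: ltn_ord. Qed.
Lemma coord_lt w i : coord w i < n. Proof. exact: ent_lt. Qed.

Lemma coord_gt_layer w i : layer w < i -> coord w i = 0.
Proof.
move=> h; case: (ltnP i k) => ik; last exact: ent_default.
by have /forallP /(_ (Ordinal ik)) /andP [/implyP /(_ h) /eqP] := valP w.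
Qed.

Lemma coord_inner_neq0 w i : 0 < i < layer w -> coord w i != 0.
Proof.
move=> h; have ik : i < k by have := layer_lt w; lia.
by have /forallP /(_ (Ordinal ik)) /andP [_ /implyP /(_ h)] := valP w.
Qed.

Lemma vertex_ext w w' : layer w = layer w' -> coord w =1 coord w' -> w = w'.
Proof.
case: w w' => [[q t] ?] [[q' t'] ?]; rewrite /layer /coord /= => /val_inj eq_q /eq_ent eq_t.
by apply: val_inj; rewrite /= eq_q eq_t.
Qed.

Definition addr_ok (q : nat) (f : nat -> nat) :=
  [/\ q < k, forall i, f i < n, forall i, q < i -> f i = 0
    & forall i, 0 < i < q -> f i != 0].

Lemma addr_ok_coord w : addr_ok (layer w) (coord w).
Proof.
by split; [exact: layer_lt | exact: coord_lt | exact: coord_gt_layer | exact: coord_inner_neq0].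
Qed.

Definition addr (q : nat) (f : nat -> nat) : 'I_k * k.-tuple 'I_n :=
  (ord_mod k_gt0 q, [tuple ord_mod n_gt0 (f i) | i < k]).

Lemma addr_valid q f : addr_ok q f -> lcg_valid (addr q f).
Proof.
case=> qk fn fhi fnz; apply/forallP => i /=.
rewrite (@ent_mktuple _ k (fun i => ord_mod n_gt0 (f i))) ltn_ord /= !modn_small //.
by apply/andP; split; apply/implyP => h; [rewrite fhi | apply: fnz].
Qed.

Lemma addr_ok0 : addr_ok 0 (fun=> 0).
Proof. by split=> // i; lia. Qed.

Definition base_vertex : V := exist _ (addr 0 (fun=> 0)) (addr_valid addr_ok0).

(* Junk value [base_vertex] when (q, f) is not a valid address. *)
Definition vertex (q : nat) (f : nat -> nat) : V := insubd base_vertex (addr q f).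

Section VertexOfAddr.
Variables (q : nat) (f : nat -> nat).
Hypothesis qf_ok : addr_ok q f.

Lemma layer_vertex : layer (vertex q f) = q.
Proof.
case: (qf_ok) => qk *; rewrite /layer insubdK; last exact: addr_valid.
exact: modn_small.
Qed.

Lemma coord_vertex : coord (vertex q f) =1 f.
Proof.
case: (qf_ok) => qk fn fhi _ i; rewrite /coord insubdK; last exact: addr_valid.
rewrite /= (@ent_mktuple _ k (fun i => ord_mod n_gt0 (f i))).
by case: ltnP => ik; [exact: modn_small | rewrite fhi //; lia].
Qed.

End VertexOfAddr.

Definition setc (w : V) (x : nat) (i : nat) := if i == layer w then x else coord w i.

Lemma addr_ok_setc w x : x < n -> addr_ok (layer w) (setc w x).
Proof.
have [qk fn fhi fnz] := addr_ok_coord w; move=> xn; rewrite /setc.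
split=> // i; case: (eqVneq i (layer w)) => [e | _]; rewrite ?e; try lia.
- exact: fn.
- exact: fhi.
- exact: fnz.
Qed.

Lemma lcg_cycP (a b : V) : reflect
  [/\ layer a = layer b, forall i, i != layer a -> coord a i = coord b i
    & cyc_adj n (coord a (layer a)) (coord b (layer a))]
  (lcg_cyc (val a) (val b)).
Proof.
apply: (iffP and3P) => [[/eqP eq_ab /forallP pre adj] | [eq_ab pre adj]].
  have eq_l : layer a = layer b by rewrite /layer eq_ab.
  split=> //; last by case/orP: adj => /eqP; [left | right].
  move=> i /negPf ne; case: (ltngtP i (layer a)) => hi; last by rewrite hi eqxx in ne.
    by apply/eqP; have := pre (Ordinal (ltn_trans hi (layer_lt a))); rewrite hi.
  by rewrite !coord_gt_layer -?eq_l.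
split; first by apply/eqP/val_inj.
  by apply/forallP => i; apply/implyP => hi; apply/eqP/pre; rewrite ltn_eqF.
by case: adj => /eqP h; apply/orP; [left | right].
Qed.

Lemma lcg_attP (a b : V) : reflect
  [/\ layer b = (layer a).+1, coord a =1 coord b & layer a = 0 \/ coord a (layer a) != 0]
  (lcg_att (val a) (val b)).
Proof.
apply: (iffP and4P) => [[/eqP eq_l /forallP pre /eqP head0 hd] | [eq_l pre hd]].
  have {}eq_l : layer b = (layer a).+1 := eq_l.
  have {}head0 : coord b (layer b) = 0 := head0.
  split=> //; last by case/orP: hd => [/eqP|]; [left | right].
  move=> i; case: (leqP i (layer a)) => hi.
    by apply/eqP; have := pre (Ordinal (leq_ltn_trans hi (layer_lt a))); rewrite hi.
  case: (ltngtP i (layer b)) => hib; first lia.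
    by rewrite !coord_gt_layer // eq_l.
  by rewrite hib head0 coord_gt_layer // eq_l.
split; [exact/eqP | by apply/forallP => i; apply/implyP => _; apply/eqP/pre | | ].
  by apply/eqP; change (coord b (layer b) = 0); rewrite -pre coord_gt_layer // eq_l.
by change ((layer a == 0) || (coord a (layer a) != 0)); case: hd => [->|->]; rewrite ?orbT.
Qed.

Lemma lcg_rel_sym : symmetric E.
Proof.
have cyc_sym (a b : V) : lcg_cyc (val a) (val b) -> lcg_cyc (val b) (val a).
  case/lcg_cycP => eq_l pre adj; apply/lcg_cycP; split=> //.
    by move=> i; rewrite -eq_l => /pre ->.
  by rewrite -eq_l; apply: cyc_adj_sym.
move=> a b; rewrite /E /lcg_edge; apply/idP/idP => /or3P [/cyc_sym h|h|h];
  by rewrite ?h ?orbT.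
Qed.

Lemma lcg_cyc_setc u x : x < n -> cyc_adj n (coord u (layer u)) x ->
  lcg_cyc (val u) (val (vertex (layer u) (setc u x))).
Proof.
move=> xn adj; have ok := addr_ok_setc u xn; apply/lcg_cycP.
rewrite layer_vertex // coord_vertex // /setc eqxx.
by split=> // i /negPf ne; rewrite coord_vertex // /setc ne.
Qed.

Lemma addr_ok_parent u : 0 < layer u -> addr_ok (layer u).-1 (coord u) <-> coord u (layer u) = 0.
Proof.
have [qk fn fhi fnz] := addr_ok_coord u; move=> l_gt0.
split=> [[_ _ hi _] | head]; first by apply: hi; lia.
split=> // [|i hi|i hi]; first lia.
  by case: (ltngtP i (layer u)) => [|/fhi|->] //; lia.
by apply: fnz; lia.
Qed.

Lemma lcg_att_parent u : 0 < layer u -> coord u (layer u) = 0 ->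
  lcg_att (val (vertex (layer u).-1 (coord u))) (val u).
Proof.
move=> l_gt0 /(addr_ok_parent l_gt0) ok; have [_ _ _ fnz] := addr_ok_coord u.
apply/lcg_attP; rewrite layer_vertex //; split; [lia | exact: coord_vertex |].
rewrite coord_vertex //.
by case: (posnP (layer u).-1) => h; [left | right; apply: fnz; lia].
Qed.

Lemma addr_ok_child u : (layer u).+1 < k -> layer u = 0 \/ coord u (layer u) != 0 ->
  addr_ok (layer u).+1 (coord u).
Proof.
have [qk fn fhi fnz] := addr_ok_coord u; move=> lk hd.
split=> // i hi; first by apply: fhi; lia.
case: (ltngtP i (layer u)) => [lt | gt | eq]; [apply: fnz; lia | lia |].
by subst i; case: hd => // h0; lia.
Qed.

Lemma lcg_att_child u : (layer u).+1 < k -> layer u = 0 \/ coord u (layer u) != 0 ->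
  lcg_att (val u) (val (vertex (layer u).+1 (coord u))).
Proof.
move=> lk hd; have ok := addr_ok_child lk hd.
by apply/lcg_attP; rewrite layer_vertex //; split=> // i; rewrite coord_vertex.
Qed.

Local Notation climb := (climb n).
Local Notation cdist := (cdist n).

(* From address t at depth q to the leaf with address c: climb to the depth
   where t leaves c, move along that cycle, descend to the leaf. *)
Definition leaf_dist (c : nat -> nat) (q : nat) (t : nat -> nat) :=
  climb t (branch c q t) q + climb c (branch c q t) k.-1
  + cdist (t (branch c q t)) (c (branch c q t)).

Lemma eq_leaf_dist c c' q t t' :
  c =1 c' -> t =1 t' -> leaf_dist c q t = leaf_dist c' q t'.
Proof.
move=> ec et; have eq_j : branch c q t = branch c' q t'.
  by apply: eq_find => i /=; rewrite ec et.
rewrite /leaf_dist eq_j (@eq_climb n t t'); last by move=> i _; exact: et.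
rewrite (@eq_climb n c c'); last by move=> i _; exact: ec.
by rewrite ec et.
Qed.

Lemma leaf_dist_at c q t i : i <= q -> (forall m, m < i -> t m = c m) -> t i != c i ->
  leaf_dist c q t = climb t i q + climb c i k.-1 + cdist (t i) (c i).
Proof. by move=> iq pre ne; rewrite /leaf_dist (@branch_eq c q t i). Qed.

Lemma leaf_dist_le c q t i : i <= q -> q <= k.-1 -> (forall m, m <= i -> t m = c m) ->
  (forall m, c m < n) -> (forall m, t m < n) -> leaf_dist c q t <= climb t i q + climb c i k.-1.
Proof.
move=> iq qk pre cn tn; have [j1 j2 j3] := branch_spec c q t.
rewrite /leaf_dist; set j := branch c q t in j1 j2 j3 *.
have ij : i <= j.
  by rewrite leqNgt; apply/negP => ji; move: (j3 (leq_trans ji iq)); rewrite pre ?eqxx //; lia.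
rewrite (climb_cat n t ij j1) (climb_cat n c ij (leq_trans j1 qk)).
case: (ltngtP i j) => [lt | ji | eq]; last by rewrite -eq !climb_nil pre // cdistxx; lia.
  have := climb_ge n t lt; have := climb_ge n c lt; have := cdist_le_via0 (tn j) (cn j).
  lia.
lia.
Qed.

Section ToLeaf.
Variable z : V.
Hypothesis z_last : layer z = k.-1.

Definition ldist (w : V) := leaf_dist (coord z) (layer w) (coord w).

(* The address of w is a prefix of that of z. *)
Definition on_path (w : V) :=
  (branch (coord z) (layer w) (coord w) == layer w) && (coord w (layer w) == coord z (layer w)).

(* The position in its own cycle from which w leaves that cycle towards z. *)
Definition cyc_target (w : V) :=
  if branch (coord z) (layer w) (coord w) < layer w then 0 else coord z (layer w).

Lemma cyc_target_lt w : cyc_target w < n.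
Proof. by rewrite /cyc_target; case: ifP; [lia | rewrite coord_lt]. Qed.

Lemma ldist_z : ldist z = 0.
Proof.
rewrite /ldist /leaf_dist (@branch_eq _ _ _ (layer z)) ?ltnn //.
by rewrite z_last !climb_nil cdistxx.
Qed.

Lemma ldist_cyc (a b : V) : lcg_cyc (val a) (val b) ->
  ldist a + cdist (coord b (layer a)) (cyc_target a) =
  ldist b + cdist (coord a (layer a)) (cyc_target a).
Proof.
case/lcg_cycP => eq_l pre _; have [j1 _ _] := branch_spec (coord z) (layer a) (coord a).
have pre_lt i : i < layer a -> coord a i = coord b i by move/ltn_eqF/negbT/pre.
rewrite /ldist /leaf_dist /cyc_target -eq_l -(@eq_branch _ _ _ _ pre_lt).
set j := branch _ _ _ in j1 *; case: ltnP => ja; last first.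
  by rewrite (_ : j = layer a) ?climb_nil; lia.
have top : climb (coord a) j (layer a) + cdist (coord b (layer a)) 0
           = climb (coord b) j (layer a) + cdist (coord a (layer a)) 0.
  by apply: climb_swap_top => // i /andP [_ ia]; apply: pre_lt.
by rewrite (pre_lt j ja); lia.
Qed.

Lemma ldist_att_up (a b : V) : lcg_att (val a) (val b) -> ~~ on_path a -> ldist b = (ldist a).+1.
Proof.
case/lcg_attP => eq_l pre _ off; have [j1 j2 j3] := branch_spec (coord z) (layer a) (coord a).
set j := branch _ _ _ in j1 j2 j3 off.
have eq_j : branch (coord z) (layer a).+1 (coord a) = j.
  apply: branch_eq => [|//|_]; first lia.
  case: (ltnP j (layer a)) => ja; first exact: j3.
  by move: off; rewrite /on_path -/j (_ : j = layer a) ?eqxx //; lia.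
rewrite /ldist eq_l -(eq_leaf_dist _ (frefl _) pre) /leaf_dist eq_j -/j climbSr //.
by rewrite (coord_gt_layer (w := a)) // cdistxx; lia.
Qed.

Lemma ldist_att_down (a b : V) : lcg_att (val a) (val b) -> on_path a -> (ldist b).+1 = ldist a.
Proof.
case/lcg_attP => eq_l pre _ /andP [/eqP ja /eqP head].
have [_ j2 _] := branch_spec (coord z) (layer a) (coord a); rewrite ja in j2.
have eq_j : branch (coord z) (layer a).+1 (coord a) = (layer a).+1.
  apply: branch_eq => // [i|]; last by rewrite ltnn.
  by rewrite ltnS leq_eqVlt => /orP [/eqP -> //|/j2].
have ak : layer a < k.-1 by have := layer_lt b; lia.
rewrite /ldist eq_l -(eq_leaf_dist _ (frefl _) pre) /leaf_dist eq_j ja !climb_nil head.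
rewrite (coord_gt_layer (w := a)) // cdistxx cdistC (climbSl _ _ ak); lia.
Qed.

Lemma ldist_lip u v : E u v -> ldist u <= (ldist v).+1.
Proof.
have att_lip (a b : V) : lcg_att (val a) (val b) -> ldist a <= (ldist b).+1 /\ ldist b <= (ldist a).+1.
  move=> ab; case: (boolP (on_path a)) => pa.
    by have := ldist_att_down ab pa; lia.
  by have := ldist_att_up ab pa; lia.
rewrite /E /lcg_rel /lcg_edge => /or3P [uv | /att_lip [] // | /att_lip [] //].
have := ldist_cyc uv; case/lcg_cycP: uv => _ _ adj.
have := cdist_adj (coord_lt v _) (coord_lt u _) (cyc_target_lt u) (cyc_adj_sym adj); lia.
Qed.

Lemma ldist_desc_cyc u : coord u (layer u) != cyc_target u ->
  exists2 v, E u v & (ldist v).+1 = ldist u.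
Proof.
move=> ne; have [x [xn adj dec]] := cdist_adj_down n_gt2 (coord_lt u _) (cyc_target_lt u) ne.
have uv := lcg_cyc_setc xn adj.
exists (vertex (layer u) (setc u x)); first by rewrite /E /lcg_rel /lcg_edge uv.
by have := ldist_cyc uv; rewrite (coord_vertex (addr_ok_setc u xn)) /setc eqxx; lia.
Qed.

Lemma ldist_desc_up u : branch (coord z) (layer u) (coord u) < layer u ->
  coord u (layer u) = 0 -> exists2 v, E u v & (ldist v).+1 = ldist u.
Proof.
move=> ju head; have [_ _ j3] := branch_spec (coord z) (layer u) (coord u).
have l_gt0 : 0 < layer u by lia.
have ok := proj2 (addr_ok_parent l_gt0) head; have att := lcg_att_parent l_gt0 head.
exists (vertex (layer u).-1 (coord u)); first by rewrite /E /lcg_rel /lcg_edge att !orbT.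
rewrite (ldist_att_up att) // /on_path layer_vertex // coord_vertex //.
rewrite (@eq_branch _ _ _ (coord u)) => [|i _]; last exact: coord_vertex.
rewrite (@branch_le _ (layer u)); last by apply/andP; split; lia.
by apply/negP => /andP [/eqP jq /eqP eqc]; move: (j3 ju); rewrite jq eqc eqxx.
Qed.

Lemma ldist_desc_down u : u != z -> on_path u -> exists2 v, E u v & (ldist v).+1 = ldist u.
Proof.
move=> uz /[dup] pu /andP [/eqP ju /eqP head].
have [_ j2 _] := branch_spec (coord z) (layer u) (coord u); rewrite ju in j2.
have lk : (layer u).+1 < k.
  suff : layer u != k.-1 by have := layer_lt u; lia.
  apply: contra uz => /eqP lu; apply/eqP/vertex_ext => [|i]; first by rewrite lu z_last.
  case: (ltngtP i (layer u)) => [/j2 // | lt | ->] //.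
  by rewrite !coord_gt_layer // z_last -lu.
have hd : layer u = 0 \/ coord u (layer u) != 0.
  by case: (posnP (layer u)) => h; [left | right; rewrite head coord_inner_neq0 //; lia].
have att := lcg_att_child lk hd.
exists (vertex (layer u).+1 (coord u)); first by rewrite /E /lcg_rel /lcg_edge att orbT.
exact: ldist_att_down att pu.
Qed.

Lemma ldist_desc u : u != z -> exists2 v, E u v & (ldist v).+1 = ldist u.
Proof.
move=> uz; case: (eqVneq (coord u (layer u)) (cyc_target u)) => [|ne]; last exact: ldist_desc_cyc.
rewrite /cyc_target; case: ltnP => ju head; first exact: ldist_desc_up.
have [j1 _ _] := branch_spec (coord z) (layer u) (coord u).
by apply: ldist_desc_down => //; rewrite /on_path head eqxx andbT; apply/eqP; lia.
Qed.

Lemma dist_to_last u : dist E u z = ldist u.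
Proof. by apply: dist_potential => [|a b|a]; [exact: ldist_z | exact: ldist_lip | exact: ldist_desc]. Qed.

End ToLeaf.

Definition last_reps : {set V} := [set w | (layer w == k.-1) && (coord w k.-1 == 1)].

Lemma last_repsP w : reflect (layer w = k.-1 /\ coord w k.-1 = 1) (w \in last_reps).
Proof. by rewrite inE; apply: (iffP andP) => -[/eqP ? /eqP ?]. Qed.

Definition probe_addr (u0 : V) (i x m : nat) :=
  if m < i then coord u0 m else if m == i then x else if m <= k.-1 then 1 else 0.

Section Probe.
Variables (u0 : V) (i x : nat).
Hypotheses (iu0 : i <= layer u0) (xn : x < n) (x_ok : x != 0 \/ i = 0).

Lemma addr_ok_probe : addr_ok k.-1 (probe_addr u0 i x).
Proof.
have := layer_lt u0; rewrite /probe_addr => lu0; split=> [|m|m|m]; first lia.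
- by case: (ltnP m i) => _ /=; [exact: coord_lt | case: (m == i) => //; case: ifP; lia].
- move=> km; case: (ltnP m i) => hmi /=; first lia.
  by case: (eqVneq m i) => [?|_]; [lia | case: ifP => //; lia].
- case: (ltnP m i) => hm /andP [m0 mk]; first by apply/coord_inner_neq0/andP; split; lia.
  by case: (eqVneq m i) => [eq_mi | _]; [case: x_ok => // i0; lia | rewrite (ltnW mk)].
Qed.

Definition probe : V := vertex k.-1 (probe_addr u0 i x).

Lemma probe_last_rep : i < k.-1 \/ x = 1 -> probe \in last_reps.
Proof.
move=> hix; have ok := addr_ok_probe.
apply/last_repsP; rewrite layer_vertex // coord_vertex //.
have ik : i <= k.-1 by have := layer_lt u0; lia.
split=> //; rewrite /probe_addr leqnn ltnNge ik /=.
by case: hix => [lt | ->]; [rewrite eq_sym ltn_eqF | case: (_ == _)].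
Qed.

Section Near.
Variable w : V.
Hypotheses (iw : i <= layer w) (w_pre : forall m, m < i -> coord w m = coord u0 m).

Lemma ldist_probe_neq : coord w i != x ->
  ldist probe w = climb (coord w) i (layer w) + climb (probe_addr u0 i x) i k.-1
                  + cdist (coord w i) x.
Proof.
move=> ne; rewrite /ldist (eq_leaf_dist _ (coord_vertex addr_ok_probe) (frefl _)).
rewrite (leaf_dist_at iw) /probe_addr ?ltnn ?eqxx // => m mi.
by rewrite mi w_pre.
Qed.

Lemma ldist_probe_le :
  ldist probe w <= climb (coord w) i (layer w) + climb (probe_addr u0 i x) i k.-1
                   + cdist (coord w i) x.
Proof.
case: (eqVneq (coord w i) x) => [eq_x | ne]; last by rewrite ldist_probe_neq.
rewrite eq_x cdistxx addn0 /ldist (eq_leaf_dist _ (coord_vertex addr_ok_probe) (frefl _)).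
apply: leaf_dist_le => //; [by have := layer_lt w; lia | | by case: addr_ok_probe | exact: coord_lt].
move=> m; rewrite leq_eqVlt /probe_addr => /orP [/eqP -> | mi].
  by rewrite ltnn eqxx eq_x.
by rewrite mi w_pre.
Qed.

End Near.
End Probe.

(* Position 0 cannot be prescribed at an inner depth i; branching off one
   level higher instead makes the distance see coord w i through its distance
   to the head. *)
Section ShiftedProbe.
Variables (u0 : V) (i : nat).
Hypotheses (i_gt0 : 0 < i) (iu0 : i <= layer u0).
Local Notation p := (coord u0 i.-1).

Lemma ldist_probe_shift w : i <= layer w -> (forall m, m < i -> coord w m = coord u0 m) ->
  ldist (probe u0 i.-1 (other p)) w
  = climb (coord w) i (layer w)
    + (climb (probe_addr u0 i.-1 (other p)) i.-1 k.-1 + cdist p (other p)).+1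
    + cdist (coord w i) 0.
Proof.
move=> iw pre.
have pre' m : m < i.-1 -> coord w m = coord u0 m by move=> mi; apply: pre; lia.
have ne : coord w i.-1 != other p by rewrite pre ?prednK // eq_sym other_neq.
have x_ok : other p != 0 \/ i.-1 = 0 by left; rewrite -lt0n other_gt0.
have iu0' : i.-1 <= layer u0 by lia.
have iw' : i.-1 <= layer w by lia.
rewrite (ldist_probe_neq iu0' (other_lt p n_gt2) x_ok iw' pre' ne).
by rewrite (climbSl _ _ (_ : i.-1 < layer w)) ?prednK // (pre i.-1); lia.
Qed.

End ShiftedProbe.

Lemma landmark_probe u0 i x : i <= layer u0 -> x < n -> (i < k.-1 \/ x <= 1) ->
  exists2 r, r \in last_reps & exists K, forall w, i <= layer w ->
    (forall m, m < i -> coord w m = coord u0 m) ->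
    ldist r w <= climb (coord w) i (layer w) + K + cdist (coord w i) x /\
    (coord w i != x -> ldist r w = climb (coord w) i (layer w) + K + cdist (coord w i) x).
Proof.
move=> iu0 xn ix; have ik : i <= k.-1 by have := layer_lt u0; lia.
case: (boolP ((x == 0) && (0 < i))) => [/andP [/eqP -> i_gt0] | direct].
  exists (probe u0 i.-1 (other (coord u0 i.-1))).
    by apply: probe_last_rep; [lia | exact: other_lt | left; rewrite -lt0n other_gt0 | lia].
  by eexists => w iw pre; rewrite ldist_probe_shift.
have x_ok : x != 0 \/ i = 0.
  by move: direct; rewrite negb_and -eqn0Ngt => /orP [|/eqP]; [left | right].
exists (probe u0 i x).
  apply: probe_last_rep => //; case: ix => [|x1]; first by left.
  by case: x_ok => [x0 | i0]; [right | left]; lia.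
exists (climb (probe_addr u0 i x) i k.-1) => w iw pre.
by split; [exact: ldist_probe_le | exact: ldist_probe_neq].
Qed.

Section Separation.
Variables u v : V.
Hypothesis same_ldist : forall r, r \in last_reps -> ldist r u = ldist r v.
Hypothesis luv : layer u <= layer v.
Local Notation i := (branch (coord v) (layer u) (coord u)).
Local Notation hu := (climb (coord u) i (layer u)).
Local Notation hv := (climb (coord v) i (layer v)).

Lemma probe_cmp x : x < n -> (i < k.-1 \/ x <= 1) ->
  (coord u i != x -> hu + cdist (coord u i) x <= hv + cdist (coord v i) x) /\
  (coord v i != x -> hv + cdist (coord v i) x <= hu + cdist (coord u i) x).
Proof.
move=> xn ix; have [j1 j2 _] := branch_spec (coord v) (layer u) (coord u).
have [r rR [K HK]] := landmark_probe j1 xn ix.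
have [Hu1 Hu2] := HK u j1 (fun _ _ => erefl).
have [Hv1 Hv2] := HK v (leq_trans j1 luv) (fun m mi => esym (j2 m mi)).
have e := same_ldist rR.
by split=> ne; [have := Hu2 ne | have := Hv2 ne]; lia.
Qed.

Lemma eq_of_branch_coord : coord u i = coord v i -> u = v.
Proof.
move=> ab; have [j1 j2 j3] := branch_spec (coord v) (layer u) (coord u).
have iu : i = layer u.
  case: (ltnP i (layer u)) => h; last lia.
  by move: (j3 h); rewrite ab eqxx.
case: (ltnP (layer u) (layer v)) => [lt | ge]; last first.
  have eq_l : layer u = layer v by lia.
  apply: vertex_ext => // m; case: (ltngtP m i) => [/j2 // | gt | eq_m]; last by rewrite eq_m.
  have mu : layer u < m by lia.
  by rewrite !coord_gt_layer // -eq_l.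
have ik : i < k.-1 by have := layer_lt v; lia.
have [cu cv] := probe_cmp (other_lt (coord u i) n_gt2) (or_introl ik).
have ne : coord u i != other (coord u i) by rewrite eq_sym other_neq.
have := cu ne; have := cv; rewrite -ab => /(_ ne).
have iv : i < layer v by lia.
by have := climb_ge n (coord v) iv; rewrite iu climb_nil; lia.
Qed.

Lemma branch_coord_eq : coord u i = coord v i.
Proof.
apply/eqP/contraT => ab; have [j1 _ _] := branch_spec (coord v) (layer u) (coord u).
have [au bv] := (coord_lt u i, coord_lt v i).
have cd_pos : 0 < cdist (coord u i) (coord v i).
  by rewrite lt0n; apply: contra ab => /eqP /(cdist_eq0 au bv) ->.
case: (ltnP i k.-1) => ik.
  have [_ cv] := probe_cmp au (or_introl ik).
  have [cu _] := probe_cmp bv (or_introl ik).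
  have ba : coord v i != coord u i by rewrite eq_sym.
  have := cv ba; have := cu ab.
  by rewrite !cdistxx (cdistC n (coord v i)); lia.
have [lu lv] : layer u = k.-1 /\ layer v = k.-1 by have := layer_lt v; lia.
have ei : i = k.-1 by lia.
have eq_hu : hu = hv by rewrite ei lu lv !climb_nil.
have eq_cd x : x <= 1 -> cdist (coord u i) x = cdist (coord v i) x.
  move=> x1; have xn : x < n by lia.
  have [cu cv] := probe_cmp xn (or_intror x1).
  case: (eqVneq (coord u i) x) => ux; case: (eqVneq (coord v i) x) => vx.
  - by rewrite ux vx.
  - by have := cv vx; rewrite ux cdistxx eq_hu; lia.
  - by have := cu ux; rewrite vx cdistxx eq_hu; lia.
  - by have := cu ux; have := cv vx; lia.
by move: ab; rewrite (cdist01_inj n_gt2 au bv (eq_cd 0 _) (eq_cd 1 _)) ?eqxx.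
Qed.

End Separation.

Lemma last_reps_resolving : resolving E last_reps.
Proof.
apply/resolvingP => u v same.
have {}same r : r \in last_reps -> ldist r u = ldist r v.
  move=> rR; have /last_repsP [r_last _] := rR.
  by rewrite -(dist_to_last r_last u) -(dist_to_last r_last v) same.
wlog luv : u v same / layer u <= layer v.
  move=> W; case: (leqP (layer u) (layer v)) => [|/ltnW]; first exact: W.
  by move=> vu; symmetry; apply: W => // r /same.
exact: eq_of_branch_coord (branch_coord_eq same luv).
Qed.

Definition same_cycle (r w : V) :=
  (layer r == layer w) && [forall m : 'I_k, (m < layer w) ==> (coord r m == coord w m)].

Lemma same_cycleP r w : reflect
  (layer r = layer w /\ forall m, m < layer w -> coord r m = coord w m) (same_cycle r w).
Proof.
apply: (iffP andP) => [[/eqP lr /forallP pre] | [lr pre]]; split=> //.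
- move=> m mw; have mk : m < k by have := layer_lt w; lia.
  by have /implyP /(_ mw) /eqP := pre (Ordinal mk).
- exact/eqP.
- by apply/forallP => m; apply/implyP => /pre ->.
Qed.

Lemma ldist_other_cycle z z' r : layer z = k.-1 -> layer z' = k.-1 ->
  (forall m, m < k.-1 -> coord z m = coord z' m) ->
  cdist (coord z k.-1) 0 = cdist (coord z' k.-1) 0 ->
  ~~ same_cycle r z -> ldist z r = ldist z' r.
Proof.
move=> zl z'l pre last_eq other; have [j1 j2 j3] := branch_spec (coord z) (layer r) (coord r).
set j := branch _ _ _ in j1 j2 j3 *.
have jk : j < k.-1.
  rewrite ltnNge; apply: contra other => kj; apply/same_cycleP.
  have rl : layer r = k.-1 by have := layer_lt r; lia.
  by split=> [|m]; rewrite ?zl // => mk; apply: j2; lia.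
have eq_j : branch (coord z') (layer r) (coord r) = j.
  apply: branch_eq => // [m mj | jr]; last by rewrite -pre ?j3.
  by rewrite -pre ?j2 //; lia.
have top : climb (coord z) j k.-1 + cdist (coord z' k.-1) 0
           = climb (coord z') j k.-1 + cdist (coord z k.-1) 0.
  by apply: climb_swap_top => // m /andP [_ mk]; apply: pre.
by rewrite /ldist /leaf_dist eq_j -/j -pre //; lia.
Qed.

Lemma resolving_meets_last_cycle R z :
  resolving E R -> z \in last_reps -> [exists r in R, same_cycle r z].
Proof.
move=> /resolvingP resR /[dup] zR /last_repsP [zl z1].
apply: contraT => /exists_inPn others.
have ok : addr_ok (layer z) (setc z n.-1) by apply: addr_ok_setc; lia.
set z' := vertex (layer z) (setc z n.-1).
have z'l : layer z' = k.-1 by rewrite layer_vertex.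
have zz' : z = z'.
  apply: resR => r rR; rewrite !(dist_sym lcg_rel_sym _ r) (dist_to_last zl) (dist_to_last z'l).
  apply: ldist_other_cycle => //; last exact: others.
    by move=> m mk; rewrite coord_vertex // /setc zl ltn_eqF.
  by rewrite coord_vertex // /setc zl eqxx z1 cdist10 ?cdist_pred0 //; lia.
by move: (coord_vertex ok (layer z)); rewrite -/z' -zz' /setc eqxx zl z1; lia.
Qed.

Lemma last_reps_card_le R : resolving E R -> #|last_reps| <= #|R|.
Proof.
move=> resR; pose rep_of (r : V) := vertex (layer r) (setc r 1).
suff sub : last_reps \subset rep_of @: R.
  exact: leq_trans (subset_leq_card sub) (leq_imset_card _ _).
apply/subsetP => z zR; have /last_repsP [zl z1] := zR.
have /exists_inP [r rR /same_cycleP [rl pre]] := resolving_meets_last_cycle resR zR.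
apply/imsetP; exists r => //.
have ok : addr_ok (layer r) (setc r 1) by apply: addr_ok_setc; lia.
apply: vertex_ext => [|m]; first by rewrite layer_vertex.
rewrite coord_vertex // /setc rl zl.
case: (ltngtP m k.-1) => [mk | km | ->]; last by rewrite z1.
  by rewrite pre // zl.
by rewrite !coord_gt_layer ?rl ?zl.
Qed.

(* d.1 is the position in the layer-1 cycle, d.2 the inner positions minus one. *)
Definition rep_addr (d : 'I_n * (k - 2).-tuple 'I_(n - 1)) (m : nat) :=
  if m == 0 then val d.1 else if m < k.-1 then (ent d.2 m.-1).+1
  else if m == k.-1 then 1 else 0.

Lemma addr_ok_rep d : addr_ok k.-1 (rep_addr d).
Proof.
rewrite /rep_addr; split=> [|m|m km|m /andP [m0 mk]]; first lia.
- case: eqP => _; first exact: ltn_ord.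
  case: ifP => _; last by case: eqP; lia.
  by have := ent_lt d.2 m.-1 (_ : 0 < n - 1); lia.
- by rewrite !gtn_eqF ?ltnNge ?(ltnW km) //; lia.
- by rewrite (negbTE (lt0n_neq0 m0)) mk.
Qed.

Definition rep d : V := vertex k.-1 (rep_addr d).

Lemma rep_inj : injective rep.
Proof.
move=> [a t] [a' t'] /(congr1 coord) eq_c.
have eq_r m : rep_addr (a, t) m = rep_addr (a', t') m.
  by rewrite -!(coord_vertex (addr_ok_rep _)) eq_c.
congr pair; first by apply: val_inj; have := eq_r 0.
apply: eq_ent => m; case: (ltnP m (k - 2)) => mk; last by rewrite !ent_default.
have mk1 : m.+1 < k.-1 by lia.
by have := eq_r m.+1; rewrite /rep_addr /= mk1 => -[].
Qed.

Lemma last_repsE : last_reps = rep @: setT.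
Proof.
apply/setP => z; apply/idP/imsetP => [/last_repsP [zl z1] | [d _ ->]]; last first.
  have ok := addr_ok_rep d; apply/last_repsP; rewrite layer_vertex // coord_vertex //.
  by rewrite /rep_addr ltnn eqxx (_ : k.-1 == 0 = false) //; lia.
have n1_gt0 : 0 < n - 1 by lia.
set d := (ord_mod n_gt0 (coord z 0), [tuple ord_mod n1_gt0 (coord z i.+1).-1 | i < k - 2]).
have ok := addr_ok_rep d; exists d => //.
apply: vertex_ext => [|m]; first by rewrite layer_vertex.
rewrite coord_vertex // /rep_addr /=.
case: (posnP m) => [-> | m_gt0]; first by rewrite modn_small ?coord_lt.
case: ltnP => mk.
  rewrite (@ent_mktuple _ _ (fun i => ord_mod n1_gt0 (coord z i.+1).-1)) /= prednK //.
  rewrite (_ : m <= k - 2); last lia.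
  have nz : 0 < coord z m by rewrite lt0n coord_inner_neq0 // zl m_gt0.
  by rewrite modn_small ?prednK //; have := coord_lt z m; lia.
case: eqP => [-> // | ne]; rewrite coord_gt_layer //; lia.
Qed.

Lemma card_last_reps : #|last_reps| = n * (n - 1) ^ (k - 2).
Proof. by rewrite last_repsE card_imset ?cardsT ?card_prod ?card_tuple ?card_ord //; exact: rep_inj. Qed.

Lemma metric_dim_lcg : metric_dim E = #|last_reps|.
Proof. exact: metric_dim_min last_reps_resolving last_reps_card_le. Qed.

End LCG.

Theorem theorem3 (n k : nat) :
  3 <= n -> 2 <= k ->
  metric_dim (lcg_rel n k) = n * (n - 1) ^ (k - 2).
Proof. by move=> n_gt2 k_gt1; rewrite metric_dim_lcg // card_last_reps. Qed.
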